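(* Let $G$ be a finite two-player zero-sum game with finite pure strategy sets $S_1,S_2$ and payoffs $v_1=-v_2$, extended bilinearly to mixed strategies. Run Anytime Double Oracle (ADO) from nonempty initial populations $\Pi^0_1\subseteq S_1$, $\Pi^0_2\subseteq S_2$: at each iteration $t$, for each $i\in\{1,2\}$ let $\pi^r_i$ be player $i$'s Nash equilibrium strategy in the restricted game $G^i$, in which player $i$ may only play mixed strategies supported on $\Pi^t_i$ while player $-i$ may play any mixed strategy in $\Delta(S_{-i})$ (i.e. $\pi^r_i\in\arg\max_{\sigma_i\in\Delta(\Pi^t_i)}\min_{\sigma_{-i}\in\Delta(S_{-i})}v_i(\sigma_i,\sigma_{-i})$); then for each $i$ add to $\Pi^t_i$ a pure best response of player $i$ to $\pi^r_{-i}$, chosen outside $\Pi^t_i$ whenever possible. ADO terminates at an iteration $t$ at which, for neither player $i\in\{1,2\}$, there exists a pure best response to $\pi^r_{-i}$ that is not in $\Pi^t_i$. Then, when ADO terminates, the profile $(\pi^r_1,\pi^r_2)$ is a Nash equilibrium of the full game $G$.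
   Context: $\Delta(X)$ denotes the set of mixed strategies supported on the set $X$ of pure strategies. A best response of player $i$ to $\pi_{-i}$ is a strategy maximizing $v_i(\cdot,\pi_{-i})$ over all strategies of player $i$ in the full game. A Nash equilibrium of $G$ is a profile $(\pi_1,\pi_2)$ such that for each $i$, $v_i(\pi_i,\pi_{-i})=\max_{\pi_i'}v_i(\pi_i',\pi_{-i})$. *)

From mathcomp Require Import all_boot all_order all_algebra.
Set Implicit Arguments. Unset Strict Implicit. Unset Printing Implicit Defensive.
Import Order.TTheory GRing.Theory Num.Theory.
Local Open Scope ring_scope.

Section Game.
Variables (R : realFieldType) (S1 S2 : finType).

Definition mixed (S : finType) (P : {set S}) (x : {ffun S -> R}) : Prop :=
  [/\ (forall s, 0 <= x s), \sum_s x s = 1 & (forall s, s \notin P -> x s = 0)].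

Definition pure (S : finType) (s : S) : {ffun S -> R} := [ffun t => (t == s)%:R].

Definition v1 (A : S1 -> S2 -> R) (x : {ffun S1 -> R}) (y : {ffun S2 -> R}) : R :=
  \sum_i \sum_j x i * y j * A i j.
Definition v2 (A : S1 -> S2 -> R) (x : {ffun S1 -> R}) (y : {ffun S2 -> R}) : R :=
  - v1 A x y.

Definition restricted_NE (A : S1 -> S2 -> R) (P1 : {set S1}) (P2 : {set S2})
    (x : {ffun S1 -> R}) (y : {ffun S2 -> R}) : Prop :=
  [/\ mixed P1 x, mixed P2 y,
      (forall x', mixed P1 x' -> v1 A x' y <= v1 A x y) &
      (forall y', mixed P2 y' -> v2 A x y' <= v2 A x y)].

Definition nash (A : S1 -> S2 -> R) (x : {ffun S1 -> R}) (y : {ffun S2 -> R}) : Prop :=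
  restricted_NE A [set: S1] [set: S2] x y.

Definition pure_BR1 (A : S1 -> S2 -> R) (y : {ffun S2 -> R}) (s : S1) : Prop :=
  forall x', mixed [set: S1] x' -> v1 A x' y <= v1 A (pure s) y.
Definition pure_BR2 (A : S1 -> S2 -> R) (x : {ffun S1 -> R}) (s : S2) : Prop :=
  forall y', mixed [set: S2] y' -> v2 A x y' <= v2 A x (pure s).

End Game.

From mathcomp Require Import all_boot all_order all_algebra.
Import Order.TTheory GRing.Theory Num.Theory.
Set Implicit Arguments. Unset Strict Implicit. Unset Printing Implicit Defensive.
Local Open Scope ring_scope.

(* A strategy that is a best response in the full game is a convex
   combination of pure best responses, so at termination the opponent's
   strategy sigma_{-i} from the restricted game G^i is supported on the
   population Pi_{-i}.  It is therefore admissible in the other restricted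
   game G^{-i} as well, and comparing the two restricted equilibria through
   the four profiles (pi_i, pi_{-i}), (pi_i, sigma_{-i}), (sigma_i, sigma_{-i})
   and (sigma_i, pi_{-i}) shows that no deviation from (pi_1, pi_2) pays.
   Player 2's half is player 1's half in the game with roles swapped. *)

Section Mixed.
Variables (R : realFieldType) (S : finType).

Lemma mixed_setT (P : {set S}) (x : {ffun S -> R}) : mixed P x -> mixed [set: S] x.
Proof. by case=> x_ge0 x_sum1 _; split=> // s; rewrite in_setT. Qed.

Lemma sum_pure (s : S) (F : S -> R) : \sum_t pure R s t * F t = F s.
Proof.
rewrite (bigD1 s) //= ffunE eqxx mul1r big1 ?addr0 // => t /negbTE nts.
by rewrite ffunE nts mul0r.
Qed.

Lemma pure_mixed (s : S) : mixed [set: S] (pure R s).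
Proof.
split=> [t||t]; last by rewrite in_setT.
  by rewrite ffunE ler0n.
by rewrite -[1](sum_pure s (fun _ => 1)); apply: eq_bigr => t _; rewrite mulr1.
Qed.

Lemma mixed_mean_le_max (w : {ffun S -> R}) (c : S -> R) (j : S) :
  mixed [set: S] w -> (forall k, c k <= c j) -> \sum_k w k * c k <= c j.
Proof.
case=> w_ge0 w_sum1 _ c_le_j.
rewrite -[leRHS]mul1r -w_sum1 mulr_suml.
by apply: ler_sum => k _; apply: ler_wpM2l.
Qed.

(* If no pure strategy beats the mean, then the mean is the maximum, and an
   atom j below the maximum would drag the mean strictly below it. *)
Lemma mixed_support_argmax (w : {ffun S -> R}) (c : S -> R) (j : S) :
  mixed [set: S] w -> (forall k, c k <= \sum_t w t * c t) ->
  w j != 0 -> forall k, c k <= c j.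
Proof.
case=> w_ge0 w_sum1 _; set m := \sum_t _ => c_le_m wj k.
apply: le_trans (c_le_m k) _; rewrite leNgt; apply/negP => cj_lt_m.
have : m < \sum_t w t * m.
  rewrite {1}/m (bigD1 j) //= [ltRHS](bigD1 j) //=.
  apply: ltr_leD; first by rewrite ltr_pM2l // lt0r wj w_ge0.
  by apply: ler_sum => t _; apply: ler_wpM2l.
by rewrite -mulr_suml w_sum1 mul1r ltxx.
Qed.

End Mixed.

Section Game.
Variables (R : realFieldType) (S1 S2 : finType) (A : S1 -> S2 -> R).

Lemma v1_rowE (x : {ffun S1 -> R}) (y : {ffun S2 -> R}) :
  v1 A x y = \sum_i x i * \sum_j y j * A i j.
Proof. by apply: eq_bigr => i _; rewrite mulr_sumr; apply: eq_bigr => j _; rewrite mulrA. Qed.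

Lemma v1_pureE (x : {ffun S1 -> R}) (y : {ffun S2 -> R}) :
  v1 A x y = \sum_i x i * v1 A (pure R i) y.
Proof. by rewrite v1_rowE; under [RHS]eq_bigr do rewrite v1_rowE sum_pure. Qed.

Lemma pure_BR1_of_max (y : {ffun S2 -> R}) (s : S1) :
  (forall k, v1 A (pure R k) y <= v1 A (pure R s) y) -> pure_BR1 A y s.
Proof. by move=> s_max x' x'_mixed; rewrite v1_pureE mixed_mean_le_max. Qed.

Lemma best_response1_support (P : {set S1}) (x : {ffun S1 -> R}) (y : {ffun S2 -> R}) :
  mixed [set: S1] x -> (forall x', mixed [set: S1] x' -> v1 A x' y <= v1 A x y) ->
  (forall s, pure_BR1 A y s -> s \in P) -> mixed P x.
Proof.
move=> x_mixed x_best BR_in_P; have [x_ge0 x_sum1 _] := x_mixed.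
split=> // s s_notin_P; apply/eqP; apply: contraNT s_notin_P => xs.
apply/BR_in_P/pure_BR1_of_max.
apply: (@mixed_support_argmax _ _ _ (fun k => v1 A (pure R k) y) _ x_mixed _ xs) => k.
by rewrite -v1_pureE; apply/x_best/pure_mixed.
Qed.

Lemma restricted_NE_deviation1 (P1 : {set S1}) (P2 : {set S2})
    (pi1 sigma1 : {ffun S1 -> R}) (pi2 sigma2 : {ffun S2 -> R}) :
  restricted_NE A P1 [set: S2] pi1 sigma2 -> restricted_NE A [set: S1] P2 sigma1 pi2 ->
  mixed P1 sigma1 -> mixed P2 sigma2 ->
  forall x', mixed [set: S1] x' -> v1 A x' pi2 <= v1 A pi1 pi2.
Proof.
move=> [_ _ pi1_best sigma2_best] [_ pi2_mixed sigma1_best pi2_best].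
move=> sigma1P sigma2P x' x'_mixed.
have le_x'_sigma1 := sigma1_best _ x'_mixed.
have := pi2_best _ sigma2P; rewrite lerN2 => le_sigma1_pi2.
have le_sigma1_pi1 := pi1_best _ sigma1P.
have := sigma2_best _ (mixed_setT pi2_mixed); rewrite lerN2 => le_sigma2_pi2.
exact: le_trans le_x'_sigma1 (le_trans le_sigma1_pi2 (le_trans le_sigma1_pi1 le_sigma2_pi2)).
Qed.

End Game.

Section SwapPlayers.
Variables (R : realFieldType) (S1 S2 : finType) (A : S1 -> S2 -> R).

Definition swap_game : S2 -> S1 -> R := fun j i => - A i j.

Lemma v1_swap_game x y : v1 swap_game y x = v2 A x y.
Proof.
rewrite /v2 /v1 exchange_big -sumrN; apply: eq_bigr => i _.
rewrite -sumrN; apply: eq_bigr => j _.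
by rewrite /swap_game mulrN (mulrC (y j)).
Qed.

Lemma v2_swap_game x y : v2 swap_game y x = v1 A x y.
Proof. by rewrite /v2 v1_swap_game /v2 opprK. Qed.

Lemma restricted_NE_swap_game P1 P2 x y :
  restricted_NE A P1 P2 x y -> restricted_NE swap_game P2 P1 y x.
Proof.
case=> x_mixed y_mixed x_best y_best.
by split=> // [y' /y_best | x' /x_best]; rewrite ?v1_swap_game ?v2_swap_game.
Qed.

Lemma pure_BR2_swap_game x s : pure_BR1 swap_game x s -> pure_BR2 A x s.
Proof. by move=> s_best y' /s_best; rewrite !v1_swap_game. Qed.

End SwapPlayers.

Theorem proposition2 (R : realFieldType) (S1 S2 : finType)
  (A : S1 -> S2 -> R) (P1 : {set S1}) (P2 : {set S2})
  (pi1 : {ffun S1 -> R}) (pi2 : {ffun S2 -> R}) :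
  P1 != set0 -> P2 != set0 ->
  (* pi1 is player 1's NE strategy in G^1 (player 1 restricted to P1) *)
  (exists sigma2, restricted_NE A P1 [set: S2] pi1 sigma2) ->
  (* pi2 is player 2's NE strategy in G^2 (player 2 restricted to P2) *)
  (exists sigma1, restricted_NE A [set: S1] P2 sigma1 pi2) ->
  (* termination: no pure best response outside the populations *)
  (forall s, pure_BR1 A pi2 s -> s \in P1) ->
  (forall s, pure_BR2 A pi1 s -> s \in P2) ->
  nash A pi1 pi2.
Proof.
move=> _ _ [sigma2 NE1] [sigma1 NE2] BR1_in_P1 BR2_in_P2.
have NE1' := restricted_NE_swap_game NE1; have NE2' := restricted_NE_swap_game NE2.
have [pi1_mixed _ _ _] := NE1; have [_ pi2_mixed _ _] := NE2.
have sigma1P : mixed P1 sigma1.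
  case: NE2 => sigma1_mixed _ sigma1_best _.
  exact: best_response1_support sigma1_mixed sigma1_best BR1_in_P1.
have sigma2P : mixed P2 sigma2.
  case: NE1' => sigma2_mixed _ sigma2_best _.
  apply: best_response1_support sigma2_mixed sigma2_best _ => s.
  by move/pure_BR2_swap_game; apply: BR2_in_P2.
split; [exact: mixed_setT pi1_mixed | exact: mixed_setT pi2_mixed | |].
- exact: restricted_NE_deviation1 NE1 NE2 sigma1P sigma2P.
- move=> y' /(restricted_NE_deviation1 NE2' NE1' sigma2P sigma1P).
  by rewrite !v1_swap_game.
Qed.
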